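(* Let $S\in\mathrm{Sp}(2n,\mathbb R)$ with largest singular value $e^{s}$, let $\bm f\in\mathbb Z_{\ge0}^n$ with $f_{\max}=\max_if_i$, and let $M=S\,\mathrm{diag}(D,D)\,S^T$ where $D=\mathrm{diag}(\tfrac12+f_1,\dots,\tfrac12+f_n)$ (the covariance matrix of $\mathcal U_S|\bm f\rangle$). Let $\varepsilon\ge0$ and let $F$ be a real symmetric matrix with $\|F\|\le1$ such that $M'=M+\varepsilon F$ is a valid covariance matrix. If $R'\in\mathrm{Sp}(2n,\mathbb R)$ satisfies $M'=R'\,\mathrm{diag}(D',D')\,R'^T$ for a diagonal matrix $D'$ with positive entries, then $$\|R'\|=\|R'^{-1}\|\le\sqrt{e^{2s}(1+2f_{\max})+2\varepsilon}.$$
   Context: $\mathrm{Sp}(2n,\mathbb R)=\{S\in\mathbb R^{2n\times2n}: S\Omega S^T=\Omega\}$ with $\Omega=\begin{pmatrix}0&I\\-I&0\end{pmatrix}$. A valid covariance matrix is a real symmetric positive-definite $2n\times 2n$ matrix all of whose symplectic eigenvalues are $\ge 1/2$ (the symplectic eigenvalues of $M$ are the $\nu_i>0$ with $M=R\,\mathrm{diag}(\nu,\nu)R^T$ for some $R\in\mathrm{Sp}(2n,\mathbb R)$, by Williamson's theorem). $\|\cdot\|$ is the operator norm. *)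

From HB Require Import structures.
From mathcomp Require Import all_boot all_order all_algebra.
From mathcomp Require Import all_classical all_reals.
From mathcomp Require Import sequences exp.
Set Implicit Arguments. Unset Strict Implicit. Unset Printing Implicit Defensive.
Import Order.TTheory GRing.Theory Num.Theory.
Local Open Scope ring_scope.

(* Matrices of size 2n are represented as 'M[R]_(n + n), with the
   first n coordinates being the "x" block and the last n the "p" block. *)

Definition Omega (R : realType) (n : nat) : 'M[R]_(n + n) :=
  block_mx 0 1%:M (- 1%:M) 0.

Definition symplectic (R : realType) (n : nat) (S : 'M[R]_(n + n)) : Prop :=
  S *m Omega R n *m S^T = Omega R n.

Definition diag2 (R : realType) (n : nat) (d : 'rV[R]_n) : 'M[R]_(n + n) :=
  block_mx (diag_mx d) 0 0 (diag_mx d).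

Definition vnorm (R : realType) (m : nat) (x : 'cV[R]_m) : R :=
  Num.sqrt (\sum_i x i 0 ^+ 2).

Definition opnorm (R : realType) (m k : nat) (A : 'M[R]_(m, k)) : R :=
  sup [set vnorm (A *m x) | x in [set x : 'cV[R]_k | vnorm x <= 1]]%classic.

Definition posdef (R : realType) (m : nat) (M : 'M[R]_m) : Prop :=
  forall x : 'cV[R]_m, x != 0 -> 0 < (x^T *m M *m x) 0 0.

(* Symplectic eigenvalues: the nu_i > 0 with M = R diag(nu,nu) R^T, R symplectic
   (Williamson). A valid covariance matrix is real symmetric positive definite
   with all symplectic eigenvalues >= 1/2. *)
Definition symplectic_eigenvalue (R : realType) (n : nat) (M : 'M[R]_(n + n))
    (v : R) : Prop :=
  exists (Rm : 'M[R]_(n + n)) (nu : 'rV[R]_n) (i : 'I_n),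
    symplectic Rm /\ (forall j, 0 < nu 0 j) /\
    M = Rm *m diag2 nu *m Rm^T /\ v = nu 0 i.

Definition valid_cov (R : realType) (n : nat) (M : 'M[R]_(n + n)) : Prop :=
  M^T = M /\ posdef M /\
  (forall v, symplectic_eigenvalue M v -> 2^-1 <= v).

From HB Require Import structures.
From mathcomp Require Import all_boot all_order all_algebra.
From mathcomp Require Import all_classical all_reals.
From mathcomp Require Import sequences exp.
From mathcomp Require Import ring lra.
Import Order.TTheory GRing.Theory Num.Theory.
Local Open Scope ring_scope.
Set Implicit Arguments. Unset Strict Implicit.

(* A symplectic R' satisfies R'^-1 = - Omega R'^T Omega with Omega orthogonal,
   so ||R'^-1|| = ||R'^T|| = ||R'||.  For a unit vector y, the symplectic
   eigenvalues of the valid covariance matrix M' are at least 1/2, hence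
     |R'^T y|^2 <= 2 y^T M' y = 2 y^T M y + 2 eps y^T F y
                <= (1 + 2 f_max) |S^T y|^2 + 2 eps <= e^(2s) (1 + 2 f_max) + 2 eps. *)

Lemma sum_mul_sqr_le (R : realFieldType) (I : finType) (u v : I -> R) :
  (\sum_i u i * v i) ^+ 2 <= (\sum_i u i ^+ 2) * (\sum_i v i ^+ 2).
Proof.
set a := \sum_i u i ^+ 2; set b := \sum_i u i * v i; set c := \sum_i v i ^+ 2.
have a_ge0 : 0 <= a by apply: sumr_ge0 => i _; exact: sqr_ge0.
have discr_ge0 t : 0 <= t ^+ 2 * a - 2 * t * b + c.
  have -> : t ^+ 2 * a - 2 * t * b + c = \sum_i (t * u i - v i) ^+ 2.
    rewrite /a /b /c !mulr_sumr -sumrN -!big_split /=.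
    by apply: eq_bigr => i _; rewrite -mulrA; lra.
  by apply: sumr_ge0 => i _; exact: sqr_ge0.
have [a0|a_neq0] := eqVneq a 0.
  have u0 i : u i = 0.
    apply/eqP; rewrite -sqrf_eq0; apply/eqP.
    by apply: (psumr_eq0P _ a0) => // j _; exact: sqr_ge0.
  by rewrite a0 /b big1 ?expr0n ?mul0r // => i _; rewrite u0 mul0r.
have a_gt0 : 0 < a by rewrite lt_def a_neq0.
have := mulr_ge0 a_ge0 (discr_ge0 (b / a)).
have -> : a * ((b / a) ^+ 2 * a - 2 * (b / a) * b + c) = a * c - b ^+ 2.
  by field.
by rewrite subr_ge0 mulrC.
Qed.

Section Norms.
Variable R : realType.

Lemma vnorm_ge0 m (x : 'cV[R]_m) : 0 <= vnorm x.
Proof. exact: sqrtr_ge0. Qed.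

Lemma tr_mulmx_sum m (u v : 'cV[R]_m) : (u^T *m v) 0 0 = \sum_i u i 0 * v i 0.
Proof. by rewrite mxE; apply: eq_bigr => i _; rewrite mxE. Qed.

Lemma vnorm_sqrE m (x : 'cV[R]_m) : vnorm x ^+ 2 = \sum_i x i 0 ^+ 2.
Proof. by rewrite sqr_sqrtr //; apply: sumr_ge0 => i _; exact: sqr_ge0. Qed.

Lemma vnorm_sqr m (x : 'cV[R]_m) : vnorm x ^+ 2 = (x^T *m x) 0 0.
Proof. by rewrite vnorm_sqrE tr_mulmx_sum; apply: eq_bigr => i _; rewrite expr2. Qed.

Lemma vnorm0 m : vnorm (0 : 'cV[R]_m) = 0.
Proof. by rewrite /vnorm big1 ?sqrtr0 // => i _; rewrite mxE expr0n. Qed.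

Lemma vnorm_eq0 m (x : 'cV[R]_m) : (vnorm x == 0) = (x == 0).
Proof.
apply/idP/eqP => [|->]; last by rewrite vnorm0.
have sum_ge0 : 0 <= \sum_i x i 0 ^+ 2 by apply: sumr_ge0 => i _; exact: sqr_ge0.
rewrite sqrtr_eq0 => sum_le0.
have /eqP /psumr_eq0P x0 : \sum_i x i 0 ^+ 2 == 0 by rewrite eq_le sum_le0.
apply/matrixP => i j; rewrite ord1 mxE.
by apply/eqP; rewrite -sqrf_eq0; apply/eqP/x0 => // k _; exact: sqr_ge0.
Qed.

Lemma vnormZ m k (x : 'cV[R]_m) : vnorm (k *: x) = `|k| * vnorm x.
Proof.
rewrite /vnorm -sqrtr_sqr -sqrtrM ?sqr_ge0 // mulr_sumr.
by congr Num.sqrt; apply: eq_bigr => i _; rewrite mxE exprMn.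
Qed.

Lemma tr_mulmx_le_vnorm m (u v : 'cV[R]_m) : (u^T *m v) 0 0 <= vnorm u * vnorm v.
Proof.
rewrite tr_mulmx_sum -sqrtrM; last by apply: sumr_ge0 => i _; exact: sqr_ge0.
apply: le_trans (ler_norm _) _; rewrite -sqrtr_sqr; apply: ler_wsqrtr.
exact: (sum_mul_sqr_le (fun i => u i 0) (fun i => v i 0)).
Qed.

Lemma vnorm_orthomx k m (U : 'M[R]_(k, m)) (x : 'cV[R]_m) :
  U^T *m U = 1%:M -> vnorm (U *m x) = vnorm x.
Proof.
move=> UU; apply: (@pexpIrn _ 2) => //; rewrite ?nnegrE ?vnorm_ge0 //.
by rewrite !vnorm_sqr trmx_mul mulmxA -(mulmxA x^T) UU mulmx1.
Qed.

Lemma normr_entry_le_vnorm m (x : 'cV[R]_m) i : `|x i 0| <= vnorm x.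
Proof.
rewrite -sqrtr_sqr ler_wsqrtr // (bigD1 i) //= lerDl.
by apply: sumr_ge0 => j _; exact: sqr_ge0.
Qed.

Lemma opnorm_ub m k (A : 'M[R]_(m, k)) x : vnorm x <= 1 -> vnorm (A *m x) <= opnorm A.
Proof.
move=> x_le1; apply: ub_le_sup; last by exists x.
exists (Num.sqrt (\sum_i (\sum_j `|A i j|) ^+ 2)) => _ [y y_le1 <-].
apply: ler_wsqrtr; apply: ler_sum => i _.
have Ay_le : `|(A *m y) i 0| <= \sum_j `|A i j|.
  rewrite mxE; apply: le_trans (ler_norm_sum _ _ _) _; apply: ler_sum => j _.
  rewrite normrM -[leRHS]mulr1 ler_wpM2l //.
  exact: le_trans (normr_entry_le_vnorm y j) y_le1.
by rewrite -real_normK ?num_real // lerXn2r ?nnegrE ?normr_ge0 // (le_trans _ Ay_le).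
Qed.

Lemma opnorm_le m k (A : 'M[R]_(m, k)) c :
  (forall x, vnorm x <= 1 -> vnorm (A *m x) <= c) -> opnorm A <= c.
Proof.
move=> Ax_le; apply: ge_sup; last by move=> _ [x x_le1 <-]; exact: Ax_le.
by exists (vnorm (A *m 0)), 0 => //=; rewrite vnorm0.
Qed.

Lemma opnorm_ge0 m k (A : 'M[R]_(m, k)) : 0 <= opnorm A.
Proof.
by apply: le_trans (vnorm_ge0 (A *m 0)) (opnorm_ub _ _); rewrite vnorm0.
Qed.

Lemma vnorm_mulmx_le m k (A : 'M[R]_(m, k)) x : vnorm (A *m x) <= opnorm A * vnorm x.
Proof.
have [->|x_neq0] := eqVneq x 0; first by rewrite mulmx0 !vnorm0 mulr0.
have x_gt0 : 0 < vnorm x by rewrite lt_def vnorm_eq0 x_neq0 vnorm_ge0.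
have -> : A *m x = vnorm x *: (A *m ((vnorm x)^-1 *: x)).
  by rewrite -scalemxAr scalerA divff ?gt_eqF // scale1r.
rewrite vnormZ ger0_norm ?vnorm_ge0 // mulrC ler_wpM2r ?vnorm_ge0 //.
by apply: opnorm_ub; rewrite vnormZ ger0_norm ?invr_ge0 ?vnorm_ge0 // mulVf ?gt_eqF.
Qed.

Lemma opnorm_tr_le m k (A : 'M[R]_(m, k)) : opnorm A^T <= opnorm A.
Proof.
apply: opnorm_le => y y_le1; set z := A^T *m y.
have z_sqr : vnorm z ^+ 2 = (y^T *m (A *m z)) 0 0.
  by rewrite vnorm_sqr /z trmx_mul trmxK !mulmxA.
(* |z|^2 = y . A z <= |y| |A| |z| <= |A| |z| *)
have := tr_mulmx_le_vnorm y (A *m z); rewrite -z_sqr.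
have := vnorm_mulmx_le A z; have := opnorm_ge0 A.
have := vnorm_ge0 y; have := vnorm_ge0 z; have := vnorm_ge0 (A *m z).
nra.
Qed.

Lemma opnorm_tr m k (A : 'M[R]_(m, k)) : opnorm A^T = opnorm A.
Proof.
by apply/eqP; rewrite eq_le opnorm_tr_le -{1}(trmxK A) opnorm_tr_le.
Qed.

Lemma opnormN m k (A : 'M[R]_(m, k)) : opnorm (- A) = opnorm A.
Proof.
suff opnormN_le (B : 'M[R]_(m, k)) : opnorm (- B) <= opnorm B.
  by apply/eqP; rewrite eq_le opnormN_le -{1}(opprK A) opnormN_le.
by apply: opnorm_le => x x_le1; rewrite mulNmx -scaleN1r vnormZ normrN1 mul1r opnorm_ub.
Qed.

Lemma opnorm_orthomx_le p m k l (U : 'M[R]_(p, m)) (A : 'M[R]_(m, k)) (V : 'M[R]_(k, l)) :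
  U^T *m U = 1%:M -> V^T *m V = 1%:M -> opnorm (U *m A *m V) <= opnorm A.
Proof.
move=> UU VV; apply: opnorm_le => x x_le1.
rewrite -!mulmxA vnorm_orthomx //; apply: le_trans (vnorm_mulmx_le _ _) _.
by rewrite vnorm_orthomx // ler_piMr ?opnorm_ge0.
Qed.

Lemma opnorm_orthomx n (U A V : 'M[R]_n) :
  U^T *m U = 1%:M -> V^T *m V = 1%:M -> opnorm (U *m A *m V) = opnorm A.
Proof.
move=> UU VV; apply/eqP; rewrite eq_le opnorm_orthomx_le //=.
have [UUt VVt] := (mulmx1C UU, mulmx1C VV).
rewrite -[X in opnorm X <= _](_ : U^T *m (U *m A *m V) *m V^T = A).
  by apply: opnorm_orthomx_le; rewrite trmxK.
by rewrite !mulmxA UU mul1mx -mulmxA VVt mulmx1.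
Qed.

End Norms.

Section Symplectic.
Variables (R : realType) (n : nat).
Local Notation Omega := (Omega R n).

Lemma Omega_mulmx_self : Omega *m Omega = - 1%:M.
Proof.
rewrite /Omega mulmx_block !mul0mx !mulmx0 !mul1mx !mulmx1 !add0r !addr0.
by rewrite [in RHS](scalar_mx_block n n) opp_block_mx !oppr0.
Qed.

Lemma tr_Omega : Omega^T = - Omega.
Proof.
by rewrite /Omega tr_block_mx !trmx0 trmx1 linearN /= trmx1 opp_block_mx !oppr0 opprK.
Qed.

Lemma Omega_orthogonal : Omega^T *m Omega = 1%:M.
Proof. by rewrite tr_Omega mulNmx Omega_mulmx_self opprK. Qed.

Lemma invmx_symplectic (A : 'M[R]_(n + n)) :
  symplectic A -> invmx A = - (Omega *m A^T *m Omega).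
Proof.
move=> sympA; have A_rinv : A *m - (Omega *m A^T *m Omega) = 1%:M.
  by rewrite mulmxN !mulmxA sympA Omega_mulmx_self opprK.
have [A_unit _] := mulmx1_unit A_rinv.
by rewrite -[LHS]mulmx1 -A_rinv mulmxA mulVmx // mul1mx.
Qed.

Lemma opnorm_invmx_symplectic (A : 'M[R]_(n + n)) :
  symplectic A -> opnorm (invmx A) = opnorm A.
Proof.
move=> sympA; rewrite invmx_symplectic // opnormN.
by rewrite opnorm_orthomx ?Omega_orthogonal ?opnorm_tr.
Qed.

End Symplectic.

Section QuadraticForms.
Variable R : realType.

Definition qform m (A : 'M[R]_m) (y : 'cV[R]_m) : R := (y^T *m A *m y) 0 0.

Lemma qformD m (A B : 'M[R]_m) y : qform (A + B) y = qform A y + qform B y.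
Proof. by rewrite /qform mulmxDr mulmxDl mxE. Qed.

Lemma qformZ m k (A : 'M[R]_m) y : qform (k *: A) y = k * qform A y.
Proof. by rewrite /qform -scalemxAr -scalemxAl mxE. Qed.

Lemma qform_conj m k (B : 'M[R]_(m, k)) A y :
  qform (B *m A *m B^T) y = qform A (B^T *m y).
Proof. by rewrite /qform trmx_mul trmxK !mulmxA. Qed.

Lemma qform_le_opnorm m (A : 'M[R]_m) y : qform A y <= opnorm A * vnorm y ^+ 2.
Proof.
rewrite /qform -mulmxA; apply: le_trans (tr_mulmx_le_vnorm _ _) _.
by rewrite mulrC expr2 mulrA ler_wpM2r ?vnorm_ge0 // vnorm_mulmx_le.
Qed.

Lemma row_mx_dup_entry n (e : 'rV[R]_n) j : exists i, row_mx e e 0 j = e 0 i.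
Proof.
rewrite -[j](@fintype.splitK n n).
by case: (fintype.split j) => i; [rewrite row_mxEl | rewrite row_mxEr]; exists i.
Qed.

Lemma qform_diag2 n (e : 'rV[R]_n) w :
  qform (diag2 e) w = \sum_j row_mx e e 0 j * w j 0 ^+ 2.
Proof.
rewrite /qform /diag2 -diag_mx_row mul_mx_diag mxE; apply: eq_bigr => j _.
by rewrite !mxE expr2 [LHS]mulrAC [LHS]mulrC.
Qed.

Lemma qform_diag2_ge n a (e : 'rV[R]_n) w :
  (forall i, a <= e 0 i) -> a * vnorm w ^+ 2 <= qform (diag2 e) w.
Proof.
move=> a_le; rewrite qform_diag2 vnorm_sqrE mulr_sumr; apply: ler_sum => j _.
by have [i ->] := row_mx_dup_entry e j; rewrite ler_wpM2r ?sqr_ge0.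
Qed.

Lemma qform_diag2_le n a (e : 'rV[R]_n) w :
  (forall i, e 0 i <= a) -> qform (diag2 e) w <= a * vnorm w ^+ 2.
Proof.
move=> le_a; rewrite qform_diag2 vnorm_sqrE mulr_sumr; apply: ler_sum => j _.
by have [i ->] := row_mx_dup_entry e j; rewrite ler_wpM2r ?sqr_ge0.
Qed.

Lemma qform_conj_diag2_ge m n a (B : 'M[R]_(m, n + n)) (e : 'rV[R]_n) y :
  (forall i, a <= e 0 i) -> a * vnorm (B^T *m y) ^+ 2 <= qform (B *m diag2 e *m B^T) y.
Proof. by move=> a_le; rewrite qform_conj qform_diag2_ge. Qed.

Lemma qform_conj_diag2_le m n c (B : 'M[R]_(m, n + n)) (e : 'rV[R]_n) y :
  (forall i, e 0 i <= c) -> 0 <= c -> vnorm y <= 1 ->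
  qform (B *m diag2 e *m B^T) y <= c * opnorm B ^+ 2.
Proof.
move=> le_c c_ge0 y_le1; rewrite qform_conj.
apply: le_trans (qform_diag2_le _ le_c) _.
rewrite ler_wpM2l // lerXn2r ?nnegrE ?vnorm_ge0 ?opnorm_ge0 //.
apply: le_trans (vnorm_mulmx_le _ _) _.
by rewrite opnorm_tr ler_piMr ?opnorm_ge0.
Qed.

End QuadraticForms.
Unset Implicit Arguments.

Theorem mainTheorem8 (R : realType) (n : nat) (S : 'M[R]_(n + n)) (s : R)
  (f : 'I_n -> nat) (eps : R) (F : 'M[R]_(n + n))
  (R' : 'M[R]_(n + n)) (d' : 'rV[R]_n) :
  symplectic S ->
  expR s = opnorm S ->
  let fmax := (\max_i f i)%N in
  let d := \row_i (2^-1 + (f i)%:R : R) in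
  let M := S *m diag2 d *m S^T in
  0 <= eps ->
  F^T = F ->
  opnorm F <= 1 ->
  valid_cov (M + eps *: F) ->
  symplectic R' ->
  (forall i, 0 < d' 0 i) ->
  M + eps *: F = R' *m diag2 d' *m R'^T ->
  opnorm R' = opnorm (invmx R') /\
  opnorm R' <= Num.sqrt (expR (2 * s) * (1 + 2 * fmax%:R) + 2 * eps).
Proof.
move=> sympS es fmax d M eps_ge0 _ F_le1 covM' sympR' d'_gt0 M'E.
split; first by rewrite opnorm_invmx_symplectic.
have d'_ge i : 2^-1 <= d' 0 i by apply: covM'.2.2; exists R', d', i.
have d_le i : d 0 i <= 2^-1 + fmax%:R.
  by rewrite mxE lerD2l ler_nat; exact: (leq_bigmax i).
have e2s : expR (2 * s) = opnorm S ^+ 2 by rewrite -es -expRM_natl.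
rewrite -opnorm_tr; apply: opnorm_le => y y_le1.
have lower := qform_conj_diag2_ge R' y d'_ge.
rewrite -M'E qformD qformZ in lower.
have upper : qform M y <= (2^-1 + fmax%:R) * opnorm S ^+ 2.
  by apply: qform_conj_diag2_le => //; rewrite addr_ge0 ?invr_ge0 ?ler0n.
have qF_le1 : qform F y <= 1.
  apply: le_trans (qform_le_opnorm F y) _; rewrite -[1]mulr1.
  by apply: ler_pM; rewrite ?opnorm_ge0 ?sqr_ge0 ?expr_le1 ?vnorm_ge0.
rewrite -[vnorm _]ger0_norm ?vnorm_ge0 // -sqrtr_sqr ler_wsqrtr // e2s.
have := ler_wpM2l eps_ge0 qF_le1; rewrite mulr1; lra.
Qed.
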